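(* Under either the overlap preference model or the cost preference model, for every allocation rule $F$ that is exhaustive and strongly unanimous, the pair $\langle R,F\rangle$, where $R$ is the nomination shortlisting rule, is U-FSSP-P.
   Context: Let $\mathbb{P}=\{p_1,\dots,p_m\}$ be a finite set of projects, $c:\mathbb{P}\to\mathbb{N}$ a cost function with $c(P)=\sum_{p\in P}c(p)$, $B\in\mathbb{N}$ a budget with $c(p)\le B$ for all $p$; agents $\mathcal{N}=\{1,\dots,n\}$. Tie-breaking: for a nonempty family $\mathfrak{P}$ of subsets of $\mathbb{P}$, $T(\mathfrak{P})$ is the unique $P\in\mathfrak{P}$ such that for all $P'\in\mathfrak{P}\setminus\{P\}$ the lowest-index project of $(P\setminus P')\cup(P'\setminus P)$ lies in $P$. Greedy selection $\mathit{GREED}(P,\gg)$, for $P\subseteq\mathbb{P}$ and a strict linear order $\gg$ on $P$, examines projects in the order $\gg$ and selects a project iff doing so keeps the total cost of selected projects at most $B$. Shortlisting stage: shortlisting instance $\langle\mathbb{P},c,B\rangle$; shortlisting profile $\boldsymbol{P}=(P_1,\dots,P_n)$, $P_i\subseteq\mathbb{P}$, $\bigcup\boldsymbol{P}=P_1\cup\dots\cup P_n$; $(\boldsymbol{P}_{-i},P_i')$ replaces $P_i$ by $P_i'$. The nomination shortlisting rule returns $R(I,\boldsymbol{P})=\bigcup\boldsymbol{P}$. Each agent $i$ has an awareness set $C_i\subseteq\mathbb{P}$; $\boldsymbol{C}=(C_1,\dots,C_n)$. Allocation stage: allocation instance $\langle\mathcal{P},c,B\rangle$, $\mathcal{P}\subseteq\mathbb{P}$;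 profile $\boldsymbol{A}=(A_1,\dots,A_n)$, $A_i\subseteq\mathcal{P}$; $A\subseteq\mathcal{P}$ is feasible if $c(A)\le B$, exhaustive if feasible and there is no $p\in\mathcal{P}\setminus A$ with $c(A\cup\{p\})\le B$; an allocation rule $F$ outputs a feasible $F(I,\boldsymbol{A})$; $F$ is exhaustive if its output is always exhaustive; $F$ is strongly unanimous if for every allocation instance $I$, every agent $i$, every feasible $A$, and every profile $\boldsymbol{A}$ with at least 3 agents in which $A_{i'}=A$ for all $i'\ne i$, we have $F(I,\boldsymbol{A})\supseteq A$. Preferences: each agent $i$ has a strict linear order $\rhd_i$ on $\mathbb{P}$; $\mathit{top}_i(\mathcal{P})=\mathit{GREED}(\mathcal{P},\rhd_i|_{\mathcal{P}})$. For $P\subseteq\mathbb{P}$: overlap model $A\succeq_P A'$ iff $|A\cap P|\ge|A'\cap P|$; cost model $A\succeq_P A'$ iff $c(A\cap P)\ge c(A'\cap P)$; $\succ_P$ its strict part. $\mathit{best}(\succ,\mathfrak{P})$ is the set of elements of $\mathfrak{P}$ undominated w.r.t. $\succ$. Best response: for $I=\langle\mathcal{P},c,B\rangle$, profile $\boldsymbol{A}$, agent $i$: $A_i^\star(I,\boldsymbol{A})=T(\mathit{best}(\succ_{\mathit{top}_i(\mathcal{P})},\{F(I,(\boldsymbol{A}_{-i},A_i'))\mid A_i'\subseteq\mathcal{P}\}))$ and $F^\star(I,\boldsymbol{A})=F(I,(\boldsymbol{A}_{-i},A_i^\star(I,\boldsymbol{A})))$. Pessimistic manipulation: given $R,F$,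 shortlisting instance $I_1$, profile $\boldsymbol{P}$, agent $i$, $P_i'\subseteq\mathbb{P}$, let $\mathcal{P}=R(I_1,\boldsymbol{P})$, $\mathcal{P}'=R(I_1,(\boldsymbol{P}_{-i},P_i'))$, $I_2=\langle\mathcal{P},c,B\rangle$, $I_2'=\langle\mathcal{P}',c,B\rangle$, $Q=\mathit{top}_i(\mathcal{P}\cup\mathcal{P}')$. $P_i'$ is a successful pessimistic manipulation if for all profiles $\boldsymbol{A}$ on $\mathcal{P}$ and $\boldsymbol{A}'$ on $\mathcal{P}'$, $F^\star(I_2',\boldsymbol{A}')\succeq_Q F^\star(I_2,\boldsymbol{A})$, strictly for at least one pair. U-FSSP-P: for a preference model, $\langle R,F\rangle$ is U-FSSP-P if for every shortlisting instance, awareness profile $\boldsymbol{C}$, shortlisting profile $\boldsymbol{P}$ with $P_{i'}\subseteq C_{i'}$ for all $i'$, and agent $i$, there is no $P_i'\subseteq C_i\cup\bigcup\boldsymbol{P}$ such that submitting $P_i'$ instead of $\mathit{top}_i(C_i\cup\bigcup\boldsymbol{P})$ (i.e., going from $(\boldsymbol{P}_{-i},\mathit{top}_i(C_i\cup\bigcup\boldsymbol{P}))$ to $(\boldsymbol{P}_{-i},P_i')$) is a successful pessimistic manipulation for $i$. *)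

From mathcomp Require Import all_boot all_order.
From mathcomp Require Import fingroup perm.

Set Implicit Arguments.
Unset Strict Implicit.
Unset Printing Implicit Defensive.

(* Projects are 'I_m (p_1,...,p_m, index order = order of 'I_m),
   agents are 'I_n, costs c : 'I_m -> nat, budget B : nat. *)

Section Defs.
Variable m : nat.
Implicit Types (c : 'I_m -> nat) (B : nat) (P S X Y : {set 'I_m}).

Definition csum c P : nat := \sum_(p in P) c p.

Definition tb_better (P P' : {set 'I_m}) : bool :=
  let D := (P :\: P') :|: (P' :\: P) in
  [exists x in D, (x \in P) && [forall y in D, (val x <= val y)%N]].

Definition tiebreak (fam : {set {set 'I_m}}) : {set 'I_m} :=
  odflt set0 [pick P in fam | [forall P' in fam, (P' != P) ==> tb_better P P']].

Definition greedy c B (s : seq 'I_m) : {set 'I_m} :=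
  foldl (fun A p => if (csum c (p |: A) <= B)%N then p |: A else A) set0 s.

(* A strict linear order on the projects is given by a permutation sigma:
   sigma 0 is the most preferred project, sigma 1 the second, etc. *)
Definition pref_list (sigma : {perm 'I_m}) : seq 'I_m :=
  [seq sigma k | k <- enum 'I_m].

Definition top c B (sigma : {perm 'I_m}) P : {set 'I_m} :=
  greedy c B [seq p <- pref_list sigma | p \in P].

End Defs.

Inductive pref_model := Overlap | CostModel.

Definition weak_pref (model : pref_model) m (c : 'I_m -> nat) (Q X Y : {set 'I_m}) : bool :=
  match model with
  | Overlap => (#|Y :&: Q| <= #|X :&: Q|)%N
  | CostModel => (csum c (Y :&: Q) <= csum c (X :&: Q))%N
  end.

Definition strict_pref (model : pref_model) m (c : 'I_m -> nat) (Q X Y : {set 'I_m}) : bool :=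
  weak_pref model c Q X Y && ~~ weak_pref model c Q Y X.

Definition best m (strict : {set 'I_m} -> {set 'I_m} -> bool)
  (fam : {set {set 'I_m}}) : {set {set 'I_m}} :=
  [set X in fam | ~~ [exists Y in fam, strict Y X]].

Definition upd n T (Pr : 'I_n -> T) (i : 'I_n) (X : T) : 'I_n -> T :=
  fun j => if j == i then X else Pr j.

Definition profile_on n m (PP : {set 'I_m}) (A : 'I_n -> {set 'I_m}) : Prop :=
  forall j, A j \subset PP.

(* An allocation rule (for n agents): takes an allocation instance
   <PP, c, B> (over the project universe 'I_m) and a profile. *)
Definition alloc_rule (n : nat) :=
  forall m : nat, ('I_m -> nat) -> nat -> {set 'I_m} -> ('I_n -> {set 'I_m}) -> {set 'I_m}.

Definition short_rule (n : nat) :=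
  forall m : nat, ('I_m -> nat) -> nat -> ('I_n -> {set 'I_m}) -> {set 'I_m}.

Definition nomination (n : nat) : short_rule n :=
  fun m c B Pr => \bigcup_(j < n) Pr j.

Definition valid_instance m (c : 'I_m -> nat) (B : nat) : Prop :=
  forall p : 'I_m, (c p <= B)%N.

Definition feasible m (c : 'I_m -> nat) B (PP A : {set 'I_m}) : Prop :=
  A \subset PP /\ (csum c A <= B)%N.

Definition exhaustive_set m (c : 'I_m -> nat) B (PP A : {set 'I_m}) : Prop :=
  feasible c B PP A /\ ~ (exists p, p \in PP :\: A /\ (csum c (p |: A) <= B)%N).

Definition exhaustive n (F : alloc_rule n) : Prop :=
  forall m (c : 'I_m -> nat) B (PP : {set 'I_m}) (A : 'I_n -> {set 'I_m}),
    valid_instance c B -> profile_on PP A ->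
    exhaustive_set c B PP (@F m c B PP A).

Definition strongly_unanimous n (F : alloc_rule n) : Prop :=
  forall m (c : 'I_m -> nat) B (PP : {set 'I_m}) (i : 'I_n) (A : {set 'I_m})
         (Ap : 'I_n -> {set 'I_m}),
    valid_instance c B -> feasible c B PP A -> profile_on PP Ap ->
    (2 < n)%N -> (forall i', i' != i -> Ap i' = A) ->
    A \subset @F m c B PP Ap.

Section Manip.
Variables (model : pref_model) (n : nat) (F : alloc_rule n).
Variables (m : nat) (c : 'I_m -> nat) (B : nat) (pref : 'I_n -> {perm 'I_m}).

Definition best_resp (PP : {set 'I_m}) (A : 'I_n -> {set 'I_m}) (i : 'I_n) : {set 'I_m} :=
  tiebreak (best (strict_pref model c (top c B (pref i) PP))
                 [set @F m c B PP (upd A i X) | X in powerset PP]).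

Definition Fstar (PP : {set 'I_m}) (A : 'I_n -> {set 'I_m}) (i : 'I_n) : {set 'I_m} :=
  @F m c B PP (upd A i (best_resp PP A i)).

Definition succ_pess_manip (R : short_rule n) (Pr : 'I_n -> {set 'I_m})
  (i : 'I_n) (P' : {set 'I_m}) : Prop :=
  let PP := R m c B Pr in
  let PP' := R m c B (upd Pr i P') in
  let Q := top c B (pref i) (PP :|: PP') in
  (forall A A', profile_on PP A -> profile_on PP' A' ->
     weak_pref model c Q (Fstar PP' A' i) (Fstar PP A i)) /\
  (exists A A', profile_on PP A /\ profile_on PP' A' /\
     strict_pref model c Q (Fstar PP' A' i) (Fstar PP A i)).
End Manip.

Definition U_FSSP_P (model : pref_model) (n : nat) (R : short_rule n) (F : alloc_rule n) : Prop :=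
  forall m (c : 'I_m -> nat) B, valid_instance c B ->
  forall (pref : 'I_n -> {perm 'I_m}) (C Pr : 'I_n -> {set 'I_m}),
    (forall j, Pr j \subset C j) ->
    forall (i : 'I_n) (P' : {set 'I_m}),
      P' \subset C i :|: \bigcup_(j < n) Pr j ->
      ~ succ_pess_manip model F c B pref R
          (upd Pr i (top c B (pref i) (C i :|: \bigcup_(j < n) Pr j))) i P'.

Arguments nomination : clear implicits.

(** Let [T = top_i(C_i ∪ ⋃P)] be agent [i]'s truthful nomination. Both
    shortlists lie inside [C_i ∪ ⋃P], where [T] is greedily maximal, so [T] is
    also the reference set [Q] of the comparison and is exhaustive in the
    truthful shortlist. If that shortlist contains a project [o ∉ T], then [o]
    was nominated by another agent and survives any deviation of [i]. By strong
    unanimity the profiles "everyone reports [T]" and "everyone reports an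
    exhaustive [X'] containing [o]" yield [T] and [X'], and [X'] is weakly
    better than [T] only if [X' ∩ T] costs as much as [T]; then [T ∪ {o}] fits
    in the budget, contradicting the maximality of [T]. Otherwise the truthful
    shortlist is [T] itself, which is affordable, so every profile yields [T],
    and nothing beats [T] with respect to [Q = T]. *)
From mathcomp Require Import all_boot all_order.
From mathcomp Require Import perm.

Set Implicit Arguments.
Unset Strict Implicit.
Unset Printing Implicit Defensive.

Section Exhaustive.
Variables (m : nat) (c : 'I_m -> nat) (B : nat).
Implicit Types (A V W X Y : {set 'I_m}) (s : seq 'I_m).

Lemma csum_mono X Y : X \subset Y -> csum c X <= csum c Y.
Proof. by move=> sXY; rewrite /csum [X in _ <= X](big_setID X) /= (setIidPr sXY) leq_addr. Qed.

Lemma csumU1 p X : p \notin X -> csum c (p |: X) = c p + csum c X.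
Proof. exact: big_setU1. Qed.

Lemma exhaustive_setP V A :
  exhaustive_set c B V A <->
  [/\ A \subset V, csum c A <= B &
      forall p, p \in V -> p \notin A -> B < csum c (p |: A)].
Proof.
split=> [[[sAV fA] maxA] | [sAV fA maxA]].
  split=> // p pV pA; rewrite ltnNge; apply/negP=> fpA.
  by apply: maxA; exists p; rewrite inE pA pV.
split=> // -[p [/setDP[pV pA] fpA]].
by move: (maxA p pV pA); rewrite ltnNge fpA.
Qed.

Lemma exhaustive_set_subset V W A :
  exhaustive_set c B V A -> A \subset W -> W \subset V -> exhaustive_set c B W A.
Proof.
move=> /exhaustive_setP[_ fA maxA] sAW sWV; apply/exhaustive_setP.
by split=> // p /(subsetP sWV); apply: maxA.
Qed.

Lemma exhaustive_set_feasible_eq V Y Z :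
  exhaustive_set c B V Y -> feasible c B V Z -> Y \subset Z -> Z = Y.
Proof.
move=> /exhaustive_setP[_ _ maxY] [sZV fZ] sYZ.
apply/eqP; rewrite eqEsubset sYZ andbT; apply/subsetP=> p pZ.
apply: contraT=> pY; have := maxY p (subsetP sZV p pZ) pY.
rewrite ltnNge (leq_trans _ fZ) //; apply: csum_mono.
by rewrite subUset sub1set pZ.
Qed.

Definition greedy_step A p := if csum c (p |: A) <= B then p |: A else A.

Lemma greedy_step_sup s A : A \subset foldl greedy_step A s.
Proof.
elim: s A => [|p s IHs] A //=; apply: subset_trans (IHs _).
by rewrite /greedy_step; case: ifP=> // _; apply: subsetUr.
Qed.

Lemma greedy_step_sub s A : foldl greedy_step A s \subset A :|: [set p in s].
Proof.
elim: s A => [|p s IHs] A /=; first exact: subsetUl.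
apply: subset_trans (IHs _) _; apply/subsetP=> x; rewrite /greedy_step.
by case: ifP=> _; rewrite !inE; case: (x == p); case: (x \in A); rewrite ?orbT.
Qed.

Lemma greedy_step_feasible s A : csum c A <= B -> csum c (foldl greedy_step A s) <= B.
Proof. by elim: s A => [|p s IHs] A //= fA; apply: IHs; rewrite /greedy_step; case: ifP. Qed.

Lemma greedy_step_max s A p :
  p \in s -> p \notin foldl greedy_step A s -> B < csum c (p |: foldl greedy_step A s).
Proof.
elim: s A => [|q s IHs] A //=; rewrite inE => /orP[/eqP<- | ps] pX; last exact: IHs.
move: (greedy_step_sup s (greedy_step A p)) pX; rewrite [greedy_step A p]/greedy_step.
case: (leqP (csum c (p |: A)) B)=> [_ /subsetP/(_ p (setU11 _ _))-> // | fpA sA _].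
by apply: leq_trans fpA (csum_mono _); apply: setUS.
Qed.

Lemma greedy_step_filter (P : {pred 'I_m}) s A :
  (forall p, p \in s -> p \notin P -> p \notin foldl greedy_step A s) ->
  foldl greedy_step A [seq p <- s | P p] = foldl greedy_step A s.
Proof.
elim: s A => [|q s IHs] A //= skip.
have skip_s p : p \in s -> p \notin P -> p \notin foldl greedy_step (greedy_step A q) s.
  by move=> ps; apply: skip; rewrite inE ps orbT.
case: ifP=> qP /=; first exact: IHs.
suff stepA : greedy_step A q = A by rewrite -{1}stepA IHs.
move: (skip q (mem_head _ _) (negbT qP)); rewrite /greedy_step.
case: ifP=> // _; rewrite -/greedy_step.
by rewrite (subsetP (greedy_step_sup _ _) q (setU11 _ _)).
Qed.

Lemma greedy_step_exhaustive s A V :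
  s =i V -> A \subset V -> csum c A <= B -> exhaustive_set c B V (foldl greedy_step A s).
Proof.
move=> sV sAV fA; apply/exhaustive_setP; split.
- apply: subset_trans (greedy_step_sub s A) _; rewrite subUset sAV.
  by apply/subsetP=> p; rewrite inE sV.
- exact: greedy_step_feasible.
- by move=> p; rewrite -sV; apply: greedy_step_max.
Qed.

Lemma exhaustive_set_extend V A :
  feasible c B V A -> exists2 X, exhaustive_set c B V X & A \subset X.
Proof.
move=> [sAV fA]; exists (foldl greedy_step A (enum V)); last exact: greedy_step_sup.
by apply: greedy_step_exhaustive => // p; rewrite mem_enum.
Qed.

Lemma in_pref_list (sigma : {perm 'I_m}) p : p \in pref_list sigma.
Proof. by apply/mapP; exists ((sigma^-1)%g p); rewrite ?mem_enum ?permKV. Qed.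

Lemma top_exhaustive sigma V : exhaustive_set c B V (top c B sigma V).
Proof.
apply: greedy_step_exhaustive; rewrite ?sub0set ?/csum ?big_set0 //.
by move=> p; rewrite mem_filter in_pref_list andbT.
Qed.

Lemma top_restrict sigma V W :
  top c B sigma V \subset W -> W \subset V -> top c B sigma W = top c B sigma V.
Proof.
move=> sTW sWV; rewrite /top.
have -> : [seq p <- pref_list sigma | p \in W] =
          [seq p <- [seq p <- pref_list sigma | p \in V] | p \in W].
  by rewrite -filter_predI; apply: eq_filter=> p /=; case: (boolP (p \in W))=> // /(subsetP sWV)->.
apply: greedy_step_filter=> p _; exact: contra (subsetP sTW p).
Qed.

End Exhaustive.

Section Preferences.
Variables (model : pref_model) (m : nat) (c : 'I_m -> nat).
Implicit Types (Q X : {set 'I_m}).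

Lemma weak_pref_ref Q X : weak_pref model c Q Q X.
Proof.
case: model; rewrite /= setIid; last exact/csum_mono/subsetIr.
exact/subset_leq_card/subsetIr.
Qed.

Lemma weak_pref_ref_csum Q X : weak_pref model c Q X Q -> csum c Q <= csum c (X :&: Q).
Proof.
case: model; rewrite /= setIid // => cardQ.
by have /eqP-> : X :&: Q == Q by rewrite eqEcard subsetIr cardQ.
Qed.

End Preferences.

Section BestResponse.
Variables (model : pref_model) (n : nat) (F : alloc_rule n).
Variables (m : nat) (c : 'I_m -> nat) (B : nat) (pref : 'I_n -> {perm 'I_m}).
Hypotheses (F_exhaustive : exhaustive F) (valid : valid_instance c B).
Implicit Types (PP Y : {set 'I_m}) (A : 'I_n -> {set 'I_m}).

Lemma profile_on_upd PP A i Y :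
  profile_on PP A -> Y \subset PP -> profile_on PP (upd A i Y).
Proof. by move=> pA sY j; rewrite /upd; case: eqP. Qed.

Lemma best_resp_sub PP A i : profile_on PP A -> best_resp model F c B pref PP A i \subset PP.
Proof.
move=> pA; rewrite /best_resp /tiebreak; case: pickP=> [X /andP[] | _]; last exact: sub0set.
rewrite inE => /andP[/imsetP[Y /[!powersetE] sY ->] _] _.
by have [[]] := F_exhaustive valid (profile_on_upd i pA sY).
Qed.

Lemma Fstar_exhaustive PP A i :
  profile_on PP A -> exhaustive_set c B PP (Fstar model F c B pref PP A i).
Proof. by move=> pA; apply/F_exhaustive/profile_on_upd/best_resp_sub. Qed.

Lemma Fstar_unanimous PP Y i :
  (2 < n)%N -> strongly_unanimous F -> exhaustive_set c B PP Y ->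
  Fstar model F c B pref PP (fun _ => Y) i = Y.
Proof.
move=> n_gt2 F_unan exY; have pY : profile_on PP (fun _ : 'I_n => Y) by move=> _; case: exY.1.
apply: exhaustive_set_feasible_eq (exY) (Fstar_exhaustive i pY).1 _.
apply: (F_unan _ c B PP i) => //; first exact: exY.1.
  exact/profile_on_upd/best_resp_sub.
by move=> j /negbTE ji; rewrite /upd ji.
Qed.

Lemma Fstar_affordable PP A i :
  csum c PP <= B -> profile_on PP A -> Fstar model F c B pref PP A i = PP.
Proof.
move=> fPP pA; have exF := Fstar_exhaustive i pA.
by apply/esym/(exhaustive_set_feasible_eq exF); [split | case: exF.1].
Qed.

Lemma no_weak_gain_with_new_project PP PP' T o i :
  (2 < n)%N -> strongly_unanimous F -> exhaustive_set c B PP T ->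
  o \in PP -> o \in PP' -> o \notin T ->
  ~ (forall A A', profile_on PP A -> profile_on PP' A' ->
       weak_pref model c T (Fstar model F c B pref PP' A' i)
                           (Fstar model F c B pref PP A i)).
Proof.
move=> n_gt2 F_unan exT oPP oPP' oT weak.
have [X' exX' oX'] : exists2 X', exhaustive_set c B PP' X' & [set o] \subset X'.
  by apply: exhaustive_set_extend; rewrite /feasible sub1set oPP' /csum big_set1.
have [[sTPP _] _] := exT; have [[sX' fX'] _] := exX'.
have := weak (fun=> T) (fun=> X') (fun=> sTPP) (fun=> sX').
rewrite !Fstar_unanimous // => /weak_pref_ref_csum le_T_X'T.
have /exhaustive_setP[_ _ /(_ o oPP oT)] := exT.
rewrite csumU1 // ltnNge => /negP; apply; apply: leq_trans fX'.
have oX'T : o \notin X' :&: T by rewrite inE (negbTE oT) andbF.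
apply: leq_trans (_ : csum c (o |: (X' :&: T)) <= _); first by rewrite csumU1 // leq_add2l.
by apply: csum_mono; rewrite subUset oX' subsetIl.
Qed.

Lemma no_strict_gain_affordable PP PP' A A' i :
  csum c PP <= B -> profile_on PP A ->
  ~~ strict_pref model c PP (Fstar model F c B pref PP' A' i) (Fstar model F c B pref PP A i).
Proof. by move=> fPP pA; rewrite /strict_pref (Fstar_affordable i fPP pA) weak_pref_ref andbF. Qed.

End BestResponse.

Lemma bigcup_sub_upd n m (Pr : 'I_n -> {set 'I_m}) i (Y : {set 'I_m}) :
  \bigcup_(j < n) Pr j \subset Pr i :|: \bigcup_(j < n) upd Pr i Y j.
Proof.
apply/bigcupsP=> j _; case: (eqVneq j i)=> [-> | ji]; first exact: subsetUl.
by apply: subset_trans (subsetUr _ _); apply: (bigcup_max j)=> //; rewrite /upd (negbTE ji).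
Qed.

Lemma upd_subset n m (Pr : 'I_n -> {set 'I_m}) i (Y U : {set 'I_m}) :
  (forall j, Pr j \subset U) -> Y \subset U -> forall j, upd Pr i Y j \subset U.
Proof. by move=> sPr sY j; rewrite /upd; case: eqP. Qed.

Theorem proposition5 :
  forall (model : pref_model) (n : nat) (F : alloc_rule n),
    (2 < n)%N ->
    exhaustive F -> strongly_unanimous F ->
    U_FSSP_P model (nomination n) F.
Proof.
move=> model n F n_gt2 F_exh F_unan m c B valid pref C Pr _ i P' sP' [weak strict].
set U := C i :|: _ in sP' weak strict; set T := top c B (pref i) U in weak strict.
set Pr0 := upd Pr i T in weak strict.
rewrite /nomination in weak strict.
set PP := \bigcup_(j < n) Pr0 j in weak strict; set PP' := \bigcup_(j < n) _ in weak strict.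
have exTU : exhaustive_set c B U T := top_exhaustive c B (pref i) U.
have [[sTU fT] _] := exTU.
have sPrU j : Pr j \subset U by apply: subset_trans (subsetUr _ _); apply: bigcup_max.
have sPr0U : forall j, Pr0 j \subset U by apply: upd_subset.
have sPP_U : PP \subset U by apply/bigcupsP=> j _.
have sPP'_U : PP' \subset U by apply/bigcupsP=> j _; apply: upd_subset.
have sTPP : T \subset PP by apply: (bigcup_max i)=> //; rewrite /Pr0 /upd eqxx.
have exT : exhaustive_set c B PP T := exhaustive_set_subset exTU sTPP sPP_U.
have QT : top c B (pref i) (PP :|: PP') = T.
  by apply: top_restrict; rewrite ?subUset ?sPP_U // (subset_trans sTPP) ?subsetUl.
move: weak strict; rewrite QT.
have [sPPT _ [A [A' [pA [_ gain]]]] | /subsetPn[o oPP oT] weak _] := boolP (PP \subset T).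
  have ePP : PP = T by apply/eqP; rewrite eqEsubset sPPT.
  move: gain; rewrite -ePP; apply/negP.
  by apply: (no_strict_gain_affordable model pref F_exh valid) => //; rewrite ePP.
have oPP' : o \in PP'.
  move: (subsetP (bigcup_sub_upd Pr0 i P') o oPP).
  by rewrite /Pr0 {1}/upd eqxx in_setU (negbTE oT).
exact: (no_weak_gain_with_new_project F_exh valid n_gt2 F_unan exT oPP oPP' oT weak).
Qed.
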